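(* Let $(G,\cdot)$ be a group and let $\psi\in\operatorname{End}(G,\cdot)$. Consider the subset $$N=\{\,\nu(g) : g\in G\,\},\qquad \nu(g)\colon h\mapsto g\cdot\psi(g)^{-1}\cdot h\cdot\psi(g),$$ of $\operatorname{Perm}(G)$. The following are equivalent: (a) $N$ is a subgroup of $\operatorname{Perm}(G)$; (b) $N$ is normalised by $\lambda(G)$; (c) $N$ is a regular subgroup of $\operatorname{Perm}(G)$ which normalises, and is normalised by, $\lambda(G)$; (d) $\psi([[G,\psi],G])\le Z(G,\cdot)$; (e) $(G,\cdot,\circ)$ is a bi-skew brace, where $g\circ h=g\cdot\psi(g)^{-1}\cdot h\cdot\psi(g)$ for all $g,h\in G$.
   Context: $\operatorname{Perm}(G)$ denotes the group of all permutations of the underlying set of $G$, and $\lambda\colon G\to\operatorname{Perm}(G)$, $\lambda(g)(h)=g\cdot h$, is the left regular representation. A subset $N\subseteq\operatorname{Perm}(G)$ is regular if the map $N\to G$, $\eta\mapsto\eta(1)$, is a bijection. ''$N$ normalises $\lambda(G)$'' means $\eta\lambda(G)\eta^{-1}=\lambda(G)$ for all $\eta\in N$; ''$N$ is normalised by $\lambda(G)$'' means $\lambda(g)N\lambda(g)^{-1}=N$ for all $g\in G$. For $\psi\in\operatorname{End}(G,\cdot)$ and $g\in G$, write $[g,\psi]=g\cdot\psi(g)^{-1}$, and $[G,\psi]$ for the subgroup generated by all $[g,\psi]$, $g\in G$. Commutators are $[x,y]=xyx^{-1}y^{-1}$, and for subgroups $A,B$, $[A,B]$ is the subgroup generated by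 all $[a,b]$, $a\in A,b\in B$. $Z(G,\cdot)$ is the centre. A skew (left) brace is a triple $(G,\cdot,\circ)$ where $(G,\cdot)$ and $(G,\circ)$ are groups and $g\circ(h\cdot k)=(g\circ h)\cdot g^{-1}\cdot(g\circ k)$ for all $g,h,k$ (with $g^{-1}$ the inverse in $(G,\cdot)$). A bi-skew brace is a triple $(G,\cdot,\circ)$ such that both $(G,\cdot,\circ)$ and $(G,\circ,\cdot)$ are skew braces. *)

Record group_on (T : Type) := GroupOn {
  gmul : T -> T -> T;
  gone : T;
  ginv : T -> T;
  gmulA : forall x y z, gmul x (gmul y z) = gmul (gmul x y) z;
  gmul1l : forall x, gmul gone x = x;
  gmul1r : forall x, gmul x gone = x;
  gmulVl : forall x, gmul (ginv x) x = gone;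
  gmulVr : forall x, gmul x (ginv x) = gone
}.
Arguments gmul {T} _ _ _.
Arguments gone {T} _.
Arguments ginv {T} _ _.

Definition is_group_op {T : Type} (op : T -> T -> T) : Prop :=
  exists (e : T) (i : T -> T),
    (forall x y z, op x (op y z) = op (op x y) z) /\
    (forall x, op e x = x) /\ (forall x, op x e = x) /\
    (forall x, op (i x) x = e) /\ (forall x, op x (i x) = e).

Section Defs.
Context {T : Type} (G : group_on T).
Local Notation "x * y" := (gmul G x y).
Local Notation "x ^-1" := (ginv G x) (at level 3).

Definition is_endo (psi : T -> T) : Prop :=
  forall x y, psi (x * y) = psi x * psi y.

Definition is_subgroup (H : T -> Prop) : Prop :=
  H (gone G) /\ (forall x y, H x -> H y -> H (x * y)) /\
  (forall x, H x -> H (x ^-1)).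

Definition gen (S : T -> Prop) : T -> Prop :=
  fun x => forall H, is_subgroup H -> (forall s, S s -> H s) -> H x.

Definition comm (x y : T) : T := x * y * x^-1 * y^-1.

Definition comm_psi (psi : T -> T) : T -> Prop :=
  gen (fun x => exists g, x = g * (psi g)^-1).

Definition comm_sub (A B : T -> Prop) : T -> Prop :=
  gen (fun x => exists a b, A a /\ B b /\ x = comm a b).

Definition fullset : T -> Prop := fun _ => True.

Definition center : T -> Prop := fun z => forall x, z * x = x * z.

Definition lambda (g : T) : T -> T := fun h => g * h.

Definition nu (psi : T -> T) (g : T) : T -> T :=
  fun h => g * (psi g)^-1 * h * psi g.

Definition Nset (psi : T -> T) : (T -> T) -> Prop :=
  fun f => exists g, f = nu psi g.

Definition lambdaG : (T -> T) -> Prop := fun f => exists g, f = lambda g.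

Definition inverse_fun (f f' : T -> T) : Prop :=
  (forall x, f (f' x) = x) /\ (forall x, f' (f x) = x).

(* Every element of Perm(G) is a bijection; N is a subgroup of Perm(G)
   iff it consists of bijections and is closed under identity, composition
   and inverses. *)
Definition is_perm_subgroup (N : (T -> T) -> Prop) : Prop :=
  (forall f, N f -> exists f', inverse_fun f f') /\
  N (fun x => x) /\
  (forall f1 f2, N f1 -> N f2 -> N (fun x => f1 (f2 x))) /\
  (forall f f', N f -> inverse_fun f f' -> N f').

(* regular: eta |-> eta(1) is a bijection N -> G *)
Definition is_regular (N : (T -> T) -> Prop) : Prop :=
  (forall f1 f2, N f1 -> N f2 -> f1 (gone G) = f2 (gone G) -> f1 = f2) /\
  (forall g, exists f, N f /\ f (gone G) = g).

Definition normalised_by_lambda (N : (T -> T) -> Prop) : Prop :=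
  forall g, forall f,
    N f <-> (exists eta, N eta /\
               f = (fun x => lambda g (eta (lambda (g ^-1) x)))).

Definition normalises_lambda (N : (T -> T) -> Prop) : Prop :=
  forall eta eta', N eta -> inverse_fun eta eta' ->
    forall f, lambdaG f <-> (exists l, lambdaG l /\
                              f = (fun x => eta (l (eta' x)))).

End Defs.

Definition group_axioms {T : Type} (op : T -> T -> T) (e : T) (i : T -> T) : Prop :=
  (forall x y z, op x (op y z) = op (op x y) z) /\
  (forall x, op e x = x) /\ (forall x, op x e = x) /\
  (forall x, op (i x) x = e) /\ (forall x, op x (i x) = e).

Definition is_skew_brace {T : Type} (op1 op2 : T -> T -> T) : Prop :=
  exists e1 i1 e2 i2, group_axioms op1 e1 i1 /\ group_axioms op2 e2 i2 /\
  (forall g h k, op2 g (op1 h k) = op1 (op1 (op2 g h) (i1 g)) (op2 g k)).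

Definition is_bi_skew_brace {T : Type} (op1 op2 : T -> T -> T) : Prop :=
  is_skew_brace op1 op2 /\ is_skew_brace op2 op1.

(* Write [g,psi] = g psi(g)^-1.  The permutation nu(g) : h |-> [g,psi] h psi(g)
   is a two-sided multiplication x |-> a x d, and every question about the set
   N = { nu(g) } reduces to one elementary fact: x |-> a x d equals nu(m) for
   some m iff m = a d and d psi(m)^-1 is central (two_sided_eq_iff, nu_two_sided).
   Composites nu(g) o nu(k) and conjugates lambda(g) nu(k) lambda(g)^-1 are
   again two-sided multiplications, so each lies in N exactly when a certain
   element is central; in both cases that element is (up to inversion)
   psi([[g,psi],k]) or psi([[k,psi],g]).  Hence conditions (a), (b) and (e) are
   each equivalent to
       twisted_comms_central :  psi([[g,psi],k]) is central for all g, k,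
   and this is (d) restricted to generators of [[G,psi],G]; since the
   preimage of the centre is a subgroup, it is equivalent to (d) itself.
   Regularity of N and the fact that N normalises lambda(G) hold for every
   endomorphism, which gives (c). *)

From Pilot Require Import Defs.
From Stdlib Require Import Setoid FunctionalExtensionality.

Section GroupFacts.
Variable T : Type.
Variable G : group_on T.

Local Notation "x * y" := (gmul G x y).
Local Notation "x ^-1" := (ginv G x) (at level 3).
Local Notation one := (gone G).

(* Basic group identities, oriented so that rewriting with them puts words
   in right-associated, freely reduced form. *)
Lemma mulA_r x y z : (x * y) * z = x * (y * z).
Proof. symmetry; apply gmulA. Qed.

Lemma mulKl x y : x^-1 * (x * y) = y.
Proof. rewrite gmulA, gmulVl, gmul1l; reflexivity. Qed.

Lemma mulKr x y : x * (x^-1 * y) = y.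
Proof. rewrite gmulA, gmulVr, gmul1l; reflexivity. Qed.

Lemma inv_unique a b : a * b = one -> a = b^-1.
Proof.
  intro Hab. rewrite <- (gmul1r _ G a), <- (gmulVr _ G b), gmulA, Hab.
  apply gmul1l.
Qed.

Lemma invM x y : (x * y)^-1 = y^-1 * x^-1.
Proof.
  symmetry; apply inv_unique.
  rewrite mulA_r, (gmulA _ G (x^-1)), gmulVl, gmul1l, gmulVl; reflexivity.
Qed.

Lemma invK x : (x^-1)^-1 = x.
Proof. symmetry; apply inv_unique, gmulVr. Qed.

Lemma inv1 : one^-1 = one.
Proof. symmetry; apply inv_unique, gmul1l. Qed.

Lemma group_on_axioms : group_axioms (gmul G) one (ginv G).
Proof.
  exact (conj (gmulA _ G) (conj (gmul1l _ G)
           (conj (gmul1r _ G) (conj (gmulVl _ G) (gmulVr _ G))))).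
Qed.

Lemma gen_base (S : T -> Prop) x : S x -> gen G S x.
Proof. intros Sx H _ HS. exact (HS x Sx). Qed.

End GroupFacts.

Global Hint Rewrite mulA_r gmul1l gmul1r gmulVl gmulVr mulKl mulKr invK inv1 invM
  : grp.

Section Centre.
Variable T : Type.
Variable G : group_on T.

Local Notation "x * y" := (gmul G x y).
Local Notation "x ^-1" := (ginv G x) (at level 3).
Local Notation one := (gone G).

Ltac grp := autorewrite with grp; reflexivity.

Lemma center_subgroup : is_subgroup G (center G).
Proof.
  split; [|split].
  - intro x; grp.
  - intros a b Ha Hb x. rewrite mulA_r, Hb, <- mulA_r, Ha, mulA_r; reflexivity.
  - intros a Ha x. transitivity (a^-1 * (x * a) * a^-1); [grp|].
    rewrite <- Ha; grp.
Qed.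

Lemma center_inv_iff a : center G (a^-1) <-> center G a.
Proof.
  split; intro Ha.
  - rewrite <- (invK _ G a). exact (proj2 (proj2 center_subgroup) _ Ha).
  - exact (proj2 (proj2 center_subgroup) _ Ha).
Qed.

Lemma center_conj z a : center G z -> a * z * a^-1 = z.
Proof. intro Hz. rewrite <- Hz; grp. Qed.

Lemma two_sided_eq_iff a b c d :
  (forall x, a * x * b = c * x * d) <-> a * b = c * d /\ center G (d * b^-1).
Proof.
  split.
  - intro H. assert (H1 := H one). rewrite !gmul1r in H1. split; [exact H1|].
    assert (Edb : d * b^-1 = c^-1 * a).
    { transitivity (c^-1 * (c * d) * b^-1); [grp|]. rewrite <- H1; grp. }
    intro y. rewrite Edb at 1.
    transitivity (c^-1 * (a * y * b) * b^-1); [grp|]. rewrite H; grp.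
  - intros [H1 Hz] x.
    assert (Ea : a = c * d * b^-1).
    { transitivity (a * b * b^-1); [grp|]. rewrite H1; reflexivity. }
    rewrite Ea. transitivity (c * (d * b^-1 * x) * b); [grp|].
    rewrite (Hz x); grp.
Qed.

End Centre.

Section TwistedConjugation.
Variable T : Type.
Variable G : group_on T.
Variable psi : T -> T.
Hypothesis Hpsi : is_endo G psi.

Local Notation "x * y" := (gmul G x y).
Local Notation "x ^-1" := (ginv G x) (at level 3).
Local Notation one := (gone G).
Local Notation nu := (nu G psi).
Local Notation center := (center G).
Local Notation tw g := (g * (psi g)^-1).

Lemma psiM x y : psi (x * y) = psi x * psi y.
Proof. apply Hpsi. Qed.

Lemma psi1 : psi one = one.
Proof.
  assert (E : psi one * psi one = psi one * one)
    by (rewrite <- psiM, !gmul1r; reflexivity).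
  rewrite <- (mulKl _ G (psi one) (psi one)), E; autorewrite with grp; reflexivity.
Qed.

Lemma psiV x : psi (x^-1) = (psi x)^-1.
Proof. apply inv_unique. rewrite <- psiM, gmulVl, psi1; reflexivity. Qed.

Hint Rewrite psiM psiV psi1 : grp.
Ltac grp := autorewrite with grp; reflexivity.

Definition twisted_comms_central : Prop :=
  forall g k, center (psi (comm G (tw g) k)).

Lemma nu_one x : nu one x = x.
Proof. unfold Defs.nu; grp. Qed.

Lemma nu_at_one g : nu g one = g.
Proof. unfold Defs.nu; grp. Qed.

Lemma nu_solve g x y : nu g y = x -> y = (tw g)^-1 * x * (psi g)^-1.
Proof. intros <-. unfold Defs.nu; grp. Qed.

Lemma nu_bijective g :
  inverse_fun (nu g) (fun x => (tw g)^-1 * x * (psi g)^-1).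
Proof. split; intro x; unfold Defs.nu; grp. Qed.

Lemma nu_two_sided m a d :
  (forall x, nu m x = a * x * d) <-> m = a * d /\ center (d * (psi m)^-1).
Proof.
  rewrite (two_sided_eq_iff _ G (tw m) (psi m) a d).
  replace (tw m * psi m) with m by grp. reflexivity.
Qed.

Lemma nu_two_sided_ex a d :
  (exists m, forall x, nu m x = a * x * d) <-> center (d * (psi (a * d))^-1).
Proof.
  split.
  - intros [m Hm]. apply nu_two_sided in Hm. destruct Hm as [-> Hc]. exact Hc.
  - intro Hc. exists (a * d). apply nu_two_sided. split; [reflexivity|exact Hc].
Qed.

Lemma nu_nu g k x : nu g (nu k x) = (tw g * tw k) * x * (psi k * psi g).
Proof. unfold Defs.nu; grp. Qed.

Lemma comp_twist_identity g k :
  psi k * psi g * (psi (tw g * tw k * (psi k * psi g)))^-1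
  = (psi (comm G (tw g) k))^-1.
Proof. unfold comm; grp. Qed.

Lemma nu_comp_iff g k :
  (exists m, forall x, nu m x = nu g (nu k x)) <-> center (psi (comm G (tw g) k)).
Proof.
  setoid_rewrite nu_nu.
  rewrite nu_two_sided_ex, comp_twist_identity. apply center_inv_iff.
Qed.

Lemma nu_comp g k : center (psi (comm G (tw g) k)) ->
  forall x, nu (nu g k) x = nu g (nu k x).
Proof.
  intros Hc x. rewrite nu_nu. revert x. apply nu_two_sided. split.
  - unfold Defs.nu; grp.
  - replace (nu g k) with (tw g * tw k * (psi k * psi g)) by (unfold Defs.nu; grp).
    rewrite comp_twist_identity. apply center_inv_iff, Hc.
Qed.

Lemma nu_conj_iff g k :
  (exists m, forall x, nu m x = g * nu k (g^-1 * x))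
  <-> center (psi (comm G (tw k) g)).
Proof.
  assert (E : forall x, g * nu k (g^-1 * x) = (g * tw k * g^-1) * x * psi k)
    by (intro x; unfold Defs.nu; grp).
  setoid_rewrite E. rewrite nu_two_sided_ex.
  replace (psi k * (psi (g * tw k * g^-1 * psi k))^-1)
    with (psi (comm G (tw k) g)) by (unfold comm; grp).
  reflexivity.
Qed.

Definition circ_inv g : T := (tw g)^-1 * (psi g)^-1.

Lemma nu_circ_inv_r g : nu g (circ_inv g) = one.
Proof. unfold Defs.nu, circ_inv; grp. Qed.

Lemma nu_circ_inv_explicit g : twisted_comms_central ->
  forall x, nu (circ_inv g) x = (tw g)^-1 * x * (psi g)^-1.
Proof.
  intros HP x. apply nu_solve.
  rewrite <- nu_comp by apply HP. rewrite nu_circ_inv_r. apply nu_one.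
Qed.

Lemma nu_circ_inv_l g : twisted_comms_central -> nu (circ_inv g) g = one.
Proof. intro HP. rewrite nu_circ_inv_explicit by exact HP. grp. Qed.

Lemma perm_subgroup_iff :
  is_perm_subgroup (Nset G psi) <-> twisted_comms_central.
Proof.
  split.
  - intros [_ [_ [Hcomp _]]] g k.
    destruct (Hcomp (nu g) (nu k) (ex_intro _ g eq_refl) (ex_intro _ k eq_refl))
      as [m Hm].
    apply nu_comp_iff. exists m. intro x. rewrite <- Hm. reflexivity.
  - intro HP. split; [|split; [|split]].
    + intros f [g ->]. eexists. apply nu_bijective.
    + exists one. apply functional_extensionality. intro x. symmetry; apply nu_one.
    + intros f1 f2 [g ->] [k ->]. exists (nu g k).
      apply functional_extensionality. intro x. symmetry. apply nu_comp, HP.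
    + intros f f' [g ->] [Hl _]. exists (circ_inv g).
      apply functional_extensionality. intro x.
      rewrite nu_circ_inv_explicit by exact HP. apply nu_solve, Hl.
Qed.

Lemma normalised_by_lambda_iff :
  normalised_by_lambda G (Nset G psi) <-> twisted_comms_central.
Proof.
  split.
  - intros HB k g.
    destruct (proj2 (HB g (fun x => lambda G g (nu k (lambda G (g^-1) x))))
                (ex_intro _ (nu k) (conj (ex_intro _ k eq_refl) eq_refl)))
      as [m Hm].
    apply nu_conj_iff. exists m. intro x. rewrite <- Hm. reflexivity.
  - intros HP g f. split.
    + intros [k ->].
      destruct (proj2 (nu_conj_iff (g^-1) k) (HP k (g^-1))) as [m Hm].
      exists (nu m). split; [exists m; reflexivity|].
      apply functional_extensionality. intro x. unfold lambda.
      rewrite Hm. autorewrite with grp. reflexivity.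
    + intros [eta [[k ->] ->]].
      destruct (proj2 (nu_conj_iff g k) (HP k g)) as [m Hm].
      exists m. apply functional_extensionality. intro x. symmetry. apply Hm.
Qed.

Lemma Nset_regular : is_regular G (Nset G psi).
Proof.
  split.
  - intros f1 f2 [g ->] [k ->] E. rewrite !nu_at_one in E. subst; reflexivity.
  - intro g. exists (nu g). split; [exists g; reflexivity|apply nu_at_one].
Qed.

(* N always normalises lambda(G): nu(g) lambda(h) nu(g)^-1 = lambda(h')
   with h' the conjugate of h by [g,psi]. *)
Lemma Nset_normalises_lambda : normalises_lambda G (Nset G psi).
Proof.
  intros eta eta' [g ->] [Hl _] f.
  assert (Eeta' : forall x, eta' x = (tw g)^-1 * x * (psi g)^-1)
    by (intro x; apply nu_solve, Hl).
  split.
  - intros [h ->]. exists (lambda G ((tw g)^-1 * h * tw g)).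
    split; [eexists; reflexivity|].
    apply functional_extensionality. intro x. unfold lambda.
    rewrite Eeta'. unfold Defs.nu; grp.
  - intros [l [[h ->] ->]]. exists (tw g * h * (tw g)^-1).
    apply functional_extensionality. intro x. unfold lambda.
    rewrite Eeta'. unfold Defs.nu; grp.
Qed.

(* Elements a with psi([a,b]) central for all b form a subgroup, because
   [uv,w] = u [v,w] u^-1 [u,w] and [u^-1,w] = u^-1 [u,w]^-1 u. *)
Lemma central_commutator_subgroup :
  is_subgroup G (fun a => forall b, center (psi (comm G a b))).
Proof.
  split; [|split].
  - intro w. replace (psi (comm G one w)) with one by (unfold comm; grp).
    apply center_subgroup.
  - intros u v Hu Hv w.
    replace (psi (comm G (u * v) w))
      with (psi u * psi (comm G v w) * (psi u)^-1 * psi (comm G u w))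
      by (unfold comm; grp).
    rewrite center_conj by apply Hv. apply center_subgroup; auto.
  - intros u Hu w.
    replace (psi (comm G (u^-1) w))
      with ((psi u)^-1 * (psi (comm G u w))^-1 * ((psi u)^-1)^-1)
      by (unfold comm; grp).
    rewrite center_conj by apply center_inv_iff, Hu.
    apply center_inv_iff, Hu.
Qed.

Lemma center_preimage_subgroup : is_subgroup G (fun x => center (psi x)).
Proof.
  destruct (center_subgroup _ G) as [H1 [HM HV]]. split; [|split].
  - rewrite psi1; exact H1.
  - intros a b Ha Hb. rewrite psiM; auto.
  - intros a Ha. rewrite psiV; auto.
Qed.

Lemma comm_sub_central_iff :
  (forall x, comm_sub G (comm_psi G psi) (fullset (T:=T)) x -> center (psi x))
  <-> twisted_comms_central.
Proof.
  split.
  - intros HD g k. apply HD, gen_base.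
    exists (tw g), k. split; [|split; [exact I|reflexivity]].
    apply gen_base. exists g; reflexivity.
  - intros HP x Hx. apply (Hx _ center_preimage_subgroup).
    intros s [a [b [Ha [_ ->]]]].
    apply (Ha _ central_commutator_subgroup).
    intros s' [g ->]. apply HP.
Qed.

Lemma circ_group : twisted_comms_central -> group_axioms nu one circ_inv.
Proof.
  intro HP. split; [|split; [|split; [|split]]].
  - intros x y z. symmetry. apply nu_comp, HP.
  - apply nu_one.
  - apply nu_at_one.
  - intro g. apply nu_circ_inv_l, HP.
  - apply nu_circ_inv_r.
Qed.

(* The brace
   law of (G, *, nu) holds for every psi; that of (G, nu, * ) follows from
   associativity of nu and the explicit form of nu(circ_inv g). *)
Lemma bi_skew_brace_iff :
  is_bi_skew_brace (gmul G) (fun g h => nu g h) <-> twisted_comms_central.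
Proof.
  split.
  - intros [[e1 [i1 [e2 [i2 [_ [[Hassoc _] _]]]]]] _] g k.
    apply nu_comp_iff. exists (nu g k). intro x. symmetry. apply Hassoc.
  - intro HP. split.
    + exists one, (ginv G), one, circ_inv.
      split; [apply group_on_axioms|split; [exact (circ_group HP)|]].
      intros g h k. unfold Defs.nu; grp.
    + exists one, circ_inv, one, (ginv G).
      split; [exact (circ_group HP)|split; [apply group_on_axioms|]].
      intros g h k. cbv beta.
      rewrite nu_comp, nu_circ_inv_explicit by apply HP. unfold Defs.nu; grp.
Qed.

End TwistedConjugation.

Theorem theorem1p1 (T : Type) (G : group_on T) (psi : T -> T)
  (Hpsi : is_endo G psi) :
  let N := Nset G psi in
  let circ := fun g h => nu G psi g h in
  ((is_perm_subgroup N <-> normalised_by_lambda G N) /\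
   (normalised_by_lambda G N <->
      (is_perm_subgroup N /\ is_regular G N /\
       normalises_lambda G N /\ normalised_by_lambda G N)) /\
   ((is_perm_subgroup N /\ is_regular G N /\
       normalises_lambda G N /\ normalised_by_lambda G N) <->
      (forall x, comm_sub G (comm_psi G psi) (fullset (T:=T)) x ->
                 center G (psi x))) /\
   ((forall x, comm_sub G (comm_psi G psi) (fullset (T:=T)) x ->
                 center G (psi x)) <->
      is_bi_skew_brace (gmul G) circ)).
Proof.
  cbv zeta.
  pose proof (perm_subgroup_iff T G psi Hpsi) as Ha.
  pose proof (normalised_by_lambda_iff T G psi Hpsi) as Hb.
  pose proof (comm_sub_central_iff T G psi Hpsi) as Hd.
  pose proof (bi_skew_brace_iff T G psi Hpsi) as He.
  pose proof (Nset_regular T G psi) as Hreg.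
  pose proof (Nset_normalises_lambda T G psi) as Hnorm.
  tauto.
Qed.
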